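(* Consider a $K$-user downlink rate-splitting multiple access (RSMA) system in which a base station with $M$ transmit antennas sends the signal $\mathbf x=\mathbf w_c s_c+\sum_{k=1}^K \mathbf w_k s_k+\boldsymbol\eta_t$, with common-stream beamformer $\mathbf w_c\in\mathbb C^M$ and private-stream beamformers $\mathbf w_k\in\mathbb C^M$, to single-antenna users with effective channels $\mathbf h_k\in\mathbb C^M$, under transceiver hardware impairments and imperfect successive interference cancellation (SIC). The SINR of the private stream of user $k$ is \[ \gamma_{p,k}=\frac{|\mathbf h_k^{\mathrm H}\mathbf w_k|^2}{\sum_{i=1,i\neq k}^K|\mathbf h_k^{\mathrm H}\mathbf w_i|^2+\delta_{\mathrm{SIC}}^2|\mathbf h_k^{\mathrm H}\mathbf w_c|^2+\Phi_{c,k}}, \] where \[ \Phi_{c,k}=\mathbf h_k^{\mathrm H}\big[m_r\mathbf A+m_t(1+m_r)\,\widetilde{\mathrm{diag}}(\mathbf A)\big]\mathbf h_k+(1+m_r)\sigma_k^2,\qquad \mathbf A=\mathbf w_c\mathbf w_c^{\mathrm H}+\sum_{k=1}^K\mathbf w_k\mathbf w_k^{\mathrm H}. \] Consider the design problem of maximizing $U(\gamma_{p,1},\ldots,\gamma_{p,K})$ over $\mathbf w_c,\mathbf w_1,\ldots,\mathbf w_K$ subject to $\|\mathbf w_c\|^2+\sum_{k=1}^K\|\mathbf w_k\|^2\le P_{\max}$, where $U$ is any system utility function that is monotonically nondecreasing with respect to the users' SINRs. Then, when $\delta_{\mathrm{SIC}}\to 1$, the optimal solution of this RSMA problem must satisfy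 $\mathbf w_c^{\ast}=\mathbf 0$, i.e., the optimal strategy allocates no power to the common stream, and RSMA degenerates into space division multiple access (SDMA), whose private-stream SINR is $\frac{|\mathbf h_k^{\mathrm H}\mathbf w_k|^2}{\sum_{i\neq k}|\mathbf h_k^{\mathrm H}\mathbf w_i|^2+\Phi_{c,k}}$.
   Context: $s_c$ is the common data stream (decoded by all users first, then removed by SIC) and $s_k$ the private data stream of user $k$. $\boldsymbol\eta_t\sim\mathcal{CN}(\mathbf 0,m_t\,\widetilde{\mathrm{diag}}(\mathbf A))$ is transmit hardware distortion noise, and the receiver adds distortion noise of power $m_r$ times the undistorted received signal power, with $m_t,m_r\in(0,1)$. $\widetilde{\mathrm{diag}}(\cdot)$ denotes the operator that keeps the diagonal entries of a square matrix and sets all off-diagonal entries to zero. $\sigma_k^2>0$ is the AWGN variance at user $k$. $0\le\delta_{\mathrm{SIC}}\le1$ is the SIC imperfection coefficient (the fraction of the common-stream signal amplitude remaining after SIC). $P_{\max}>0$ is the total transmit power budget. The utility $U$ is a function of the private-stream SINRs $(\gamma_{p,1},\ldots,\gamma_{p,K})$ (e.g., weighted sum rate, proportional fairness, max–min fairness). *)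

From HB Require Import structures.
From mathcomp Require Import all_boot all_order all_algebra.
From mathcomp Require Import complex.
Set Implicit Arguments. Unset Strict Implicit. Unset Printing Implicit Defensive.
Import Order.TTheory GRing.Theory Num.Theory.
Local Open Scope ring_scope.

Section RSMA.
Variables (R : rcfType) (K M : nat).
Local Notation C := R[i].

Definition hermT m n (X : 'M[C]_(m, n)) : 'M[C]_(n, m) := (map_mx (@conjc R) X)^T.

Definition hdot (h w : 'cV[C]_M) : C := (hermT h *m w) 0 0.

Definition sqmod (z : C) : R := complex.Re z ^+ 2 + complex.Im z ^+ 2.

Definition sqnorm (v : 'cV[C]_M) : R := \sum_(m < M) sqmod (v m 0).

Definition Amat (wc : 'cV[C]_M) (w : 'I_K -> 'cV[C]_M) : 'M[C]_M :=
  wc *m hermT wc + \sum_(k < K) w k *m hermT (w k).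

Definition dtilde (A : 'M[C]_M) : 'M[C]_M := \matrix_(i, j) (if i == j then A i j else 0).

(* Phi_{c,k} = h^H [m_r A + m_t (1+m_r) diag~(A)] h + (1+m_r) sigma_k^2 ;
   the quadratic form is real (A Hermitian), we take its real part. *)
Definition Phi (mt mr : R) (sigma2 : R) (h : 'cV[C]_M) (A : 'M[C]_M) : R :=
  complex.Re ((hermT h *m ((mr%:C)%C *: A + ((mt * (1 + mr))%:C)%C *: dtilde A) *m h) 0 0)
  + (1 + mr) * sigma2.

Definition gamma_rsma (delta mt mr : R) (sigma2 : 'I_K -> R) (h : 'I_K -> 'cV[C]_M)
  (wc : 'cV[C]_M) (w : 'I_K -> 'cV[C]_M) (k : 'I_K) : R :=
  sqmod (hdot (h k) (w k)) /
  (\sum_(i < K | i != k) sqmod (hdot (h k) (w i))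
   + delta ^+ 2 * sqmod (hdot (h k) wc)
   + Phi mt mr (sigma2 k) (h k) (Amat wc w)).

Definition gamma_sdma (mt mr : R) (sigma2 : 'I_K -> R) (h : 'I_K -> 'cV[C]_M)
  (w : 'I_K -> 'cV[C]_M) (k : 'I_K) : R :=
  sqmod (hdot (h k) (w k)) /
  (\sum_(i < K | i != k) sqmod (hdot (h k) (w i))
   + Phi mt mr (sigma2 k) (h k) (Amat 0 w)).

Definition feasible (Pmax : R) (wc : 'cV[C]_M) (w : 'I_K -> 'cV[C]_M) : Prop :=
  sqnorm wc + \sum_(k < K) sqnorm (w k) <= Pmax.

Definition nondecreasing_utility (U : ('I_K -> R) -> R) : Prop :=
  forall g g' : 'I_K -> R, (forall k, 0 <= g k <= g' k) -> U g <= U g'.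

Definition rsma_optimal (U : ('I_K -> R) -> R) (delta mt mr Pmax : R)
  (sigma2 : 'I_K -> R) (h : 'I_K -> 'cV[C]_M) (wc : 'cV[C]_M) (w : 'I_K -> 'cV[C]_M) : Prop :=
  feasible Pmax wc w /\
  forall wc' w', feasible Pmax wc' w' ->
    U (gamma_rsma delta mt mr sigma2 h wc' w') <= U (gamma_rsma delta mt mr sigma2 h wc w).

End RSMA.

(* Along any channel h, the outer product v v^H and its diagonal part define
   nonnegative quadratic forms h^H (.) h, so adding the common stream only adds
   the nonnegative terms (delta^2 + m_r) |h^H w_c|^2 and
   m_t (1 + m_r) h^H diag~(w_c w_c^H) h to every private-stream denominator.
   Every private SINR therefore weakly improves when w_c is set to 0, which also
   frees power, and a nondecreasing utility follows suit. *)
From HB Require Import structures.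
From mathcomp Require Import all_boot all_order all_algebra.
From mathcomp Require Import complex ring lra.
Set Implicit Arguments. Unset Strict Implicit. Unset Printing Implicit Defensive.
Import Order.TTheory GRing.Theory Num.Theory.
Local Open Scope ring_scope.

Lemma ler_wpdiv2l (R : numFieldType) (a d d' : R) :
  0 <= a -> 0 < d -> d <= d' -> a / d' <= a / d.
Proof.
move=> a_ge0 d_gt0 le_dd'; apply: ler_wpM2l => //.
by rewrite lef_pV2 ?posrE // (lt_le_trans d_gt0).
Qed.

Section QuadraticForm.
Variables (R : rcfType) (M : nat).
Local Notation C := R[i].

Lemma sqmod_ge0 (z : C) : 0 <= sqmod z.
Proof. by rewrite /sqmod addr_ge0 ?sqr_ge0. Qed.

Lemma sqmod0 : sqmod (0 : C) = 0.
Proof. by rewrite /sqmod /= expr0n addr0. Qed.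

Lemma Re_mulJ (z : C) : complex.Re (z * z^*%C) = sqmod z.
Proof. by case: z => x y; rewrite /sqmod /=; ring. Qed.

Lemma Re_realM (a : R) (z : C) : complex.Re ((a%:C)%C * z) = a * complex.Re z.
Proof. by case: z => x y /=; ring. Qed.

Lemma sqnorm0 : sqnorm (0 : 'cV[C]_M) = 0.
Proof. by rewrite /sqnorm big1 // => m _; rewrite mxE sqmod0. Qed.

Lemma sqnorm_ge0 (v : 'cV[C]_M) : 0 <= sqnorm v.
Proof. by apply: sumr_ge0 => m _; apply: sqmod_ge0. Qed.

Lemma hdot0 (h : 'cV[C]_M) : hdot h 0 = 0.
Proof. by rewrite /hdot mulmx0 mxE. Qed.

Lemma hdotC (v w : 'cV[C]_M) : (hermT w *m v) 0 0 = (hdot v w)^*%C.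
Proof.
rewrite /hdot !mxE rmorph_sum; apply: eq_bigr => i _.
by rewrite !mxE rmorphM /= conjcK mulrC.
Qed.

Lemma dtildeD (X Y : 'M[C]_M) : dtilde (X + Y) = dtilde X + dtilde Y.
Proof. by apply/matrixP => i j; rewrite !mxE; case: (i == j); rewrite ?addr0. Qed.

Definition qform (h : 'cV[C]_M) (X : 'M[C]_M) : R :=
  complex.Re ((hermT h *m X *m h) 0 0).

Lemma qformD h X Y : qform h (X + Y) = qform h X + qform h Y.
Proof.
rewrite /qform mulmxDr mulmxDl mxE.
exact: (raddfD (@complex.Re R : Rcomplex R -> R)).
Qed.

Lemma qformZ h (a : R) X : qform h ((a%:C)%C *: X) = a * qform h X.
Proof. by rewrite /qform -scalemxAr -scalemxAl mxE Re_realM. Qed.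

Lemma qform_outer h (v : 'cV[C]_M) : qform h (v *m hermT v) = sqmod (hdot h v).
Proof.
by rewrite /qform /hdot mulmxA -mulmxA mxE big_ord1 -/(hdot h v) hdotC Re_mulJ.
Qed.

(* Entry j of the diagonal of v v^H contributes |conj (h j) v j|^2. *)
Lemma qform_dtilde_outer_ge0 h (v : 'cV[C]_M) : 0 <= qform h (dtilde (v *m hermT v)).
Proof.
rewrite /qform mxE (raddf_sum (@complex.Re R : Rcomplex R -> R)).
apply: sumr_ge0 => j _; rewrite mxE (bigD1 j) //= big1 ?addr0; last first.
  by move=> i /negbTE neq_ij; rewrite !mxE neq_ij mulr0.
rewrite !mxE eqxx big_ord1 !mxE.
have -> : (h j 0)^*%C * (v j 0 * (v j 0)^*%C) * h j 0
          = ((h j 0)^*%C * v j 0) * ((h j 0)^*%C * v j 0)^*%C.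
  by rewrite rmorphM /= conjcK; ring.
by rewrite Re_mulJ sqmod_ge0.
Qed.

Lemma Phi_qform mt mr s h (X : 'M[C]_M) :
  Phi mt mr s h X = mr * qform h X + mt * (1 + mr) * qform h (dtilde X) + (1 + mr) * s.
Proof. by rewrite /Phi -/(qform h _) qformD !qformZ. Qed.

End QuadraticForm.

Section PrivateSINR.
Variables (R : rcfType) (K M : nat).
Variables (mt mr : R) (sigma2 : 'I_K -> R) (h : 'I_K -> 'cV[R[i]]_M).
Hypotheses (mt_ge0 : 0 <= mt) (mr_ge0 : 0 <= mr) (sigma2_gt0 : forall k, 0 < sigma2 k).

Lemma Amat_common (wc : 'cV[R[i]]_M) (w : 'I_K -> 'cV[R[i]]_M) :
  Amat wc w = wc *m hermT wc + Amat 0 w.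
Proof. by rewrite /Amat mul0mx add0r. Qed.

Lemma qform_Amat0_ge0 (g : 'cV[R[i]]_M) (w : 'I_K -> 'cV[R[i]]_M) :
  0 <= qform g (Amat 0 w) /\ 0 <= qform g (dtilde (Amat 0 w)).
Proof.
rewrite /Amat mul0mx add0r.
apply: (big_ind (fun X => 0 <= qform g X /\ 0 <= qform g (dtilde X))).
- have dtilde0 : dtilde (0 : 'M[R[i]]_M) = 0.
    by apply/matrixP => i j; rewrite !mxE; case: (i == j).
  by rewrite dtilde0 /qform mulmx0 mul0mx mxE.
- by move=> X Y [? ?] [? ?]; rewrite dtildeD !qformD; split; apply: addr_ge0.
- by move=> k _; rewrite qform_outer sqmod_ge0 qform_dtilde_outer_ge0.
Qed.

Lemma Phi_Amat_common (k : 'I_K) (wc : 'cV[R[i]]_M) (w : 'I_K -> 'cV[R[i]]_M) :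
  Phi mt mr (sigma2 k) (h k) (Amat wc w) = Phi mt mr (sigma2 k) (h k) (Amat 0 w)
    + mr * sqmod (hdot (h k) wc) + mt * (1 + mr) * qform (h k) (dtilde (wc *m hermT wc)).
Proof. by rewrite (Amat_common wc w) !Phi_qform dtildeD !qformD qform_outer; ring. Qed.

Lemma Phi_Amat0_gt0 (k : 'I_K) (w : 'I_K -> 'cV[R[i]]_M) :
  0 < Phi mt mr (sigma2 k) (h k) (Amat 0 w).
Proof.
have [qA_ge0 qD_ge0] := qform_Amat0_ge0 (h k) w.
have noise_gt0 := mulr_gt0 (ltr_wpDr mr_ge0 ltr01) (sigma2_gt0 k).
have := mulr_ge0 mr_ge0 qA_ge0.
have := mulr_ge0 (mulr_ge0 mt_ge0 (addr_ge0 ler01 mr_ge0)) qD_ge0.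
rewrite Phi_qform; lra.
Qed.

Lemma gamma_rsma_common0 (delta : R) (w : 'I_K -> 'cV[R[i]]_M) (k : 'I_K) :
  gamma_rsma delta mt mr sigma2 h 0 w k = gamma_sdma mt mr sigma2 h w k.
Proof. by rewrite /gamma_rsma /gamma_sdma hdot0 sqmod0 mulr0 addr0. Qed.

Lemma gamma_rsma_le_sdma (delta : R) (wc : 'cV[R[i]]_M) (w : 'I_K -> 'cV[R[i]]_M)
    (k : 'I_K) :
  0 <= gamma_rsma delta mt mr sigma2 h wc w k <= gamma_sdma mt mr sigma2 h w k.
Proof.
rewrite /gamma_rsma /gamma_sdma Phi_Amat_common.
set I := \sum_(i < K | i != k) _; set P := Phi _ _ _ _ _.
have I_ge0 : 0 <= I by apply: sumr_ge0 => i _; apply: sqmod_ge0.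
have P_gt0 : 0 < P := Phi_Amat0_gt0 k w.
have common_ge0 : 0 <= delta ^+ 2 * sqmod (hdot (h k) wc)
    + mr * sqmod (hdot (h k) wc) + mt * (1 + mr) * qform (h k) (dtilde (wc *m hermT wc)).
  rewrite !addr_ge0 //; apply: mulr_ge0;
    by rewrite ?sqr_ge0 ?sqmod_ge0 ?qform_dtilde_outer_ge0 ?mulr_ge0 ?addr_ge0 ?ler01.
have num_ge0 := sqmod_ge0 (hdot (h k) (w k)).
apply/andP; split; first by rewrite divr_ge0 //; lra.
by apply: ler_wpdiv2l => //; lra.
Qed.

End PrivateSINR.

Lemma feasible_common0 (R : rcfType) (K M : nat) (Pmax : R)
    (wc : 'cV[R[i]]_M) (w : 'I_K -> 'cV[R[i]]_M) :
  feasible Pmax wc w -> feasible Pmax 0 w.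
Proof. by rewrite /feasible sqnorm0 add0r; apply: le_trans; rewrite lerDr sqnorm_ge0. Qed.

Theorem theorem1 (R : rcfType) (K M : nat) (h : 'I_K -> 'cV[R[i]]_M)
  (mt mr Pmax delta : R) (sigma2 : 'I_K -> R) (U : ('I_K -> R) -> R) :
  0 < mt < 1 -> 0 < mr < 1 -> (forall k, 0 < sigma2 k) -> 0 < Pmax ->
  nondecreasing_utility U -> delta = 1 ->
  (* the RSMA optimum is attained with no common-stream power *)
  (forall wc w, rsma_optimal U delta mt mr Pmax sigma2 h wc w ->
     rsma_optimal U delta mt mr Pmax sigma2 h 0 w) /\
  (* with w_c = 0, RSMA reduces to SDMA *)
  (forall w k, gamma_rsma delta mt mr sigma2 h 0 w k = gamma_sdma mt mr sigma2 h w k) /\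
  (* every feasible RSMA design is matched by a feasible SDMA design *)
  (forall wc w, feasible Pmax wc w ->
     exists w', feasible Pmax 0 w' /\
       U (gamma_rsma delta mt mr sigma2 h wc w) <= U (gamma_sdma mt mr sigma2 h w')).
Proof.
move=> /andP[/ltW mt_ge0 _] /andP[/ltW mr_ge0 _] sigma2_gt0 _ U_mono _.
have sinr_le_sdma := gamma_rsma_le_sdma h mt_ge0 mr_ge0 sigma2_gt0 delta.
split; last split.
- move=> wc w [feas opt]; split; first exact: feasible_common0 feas.
  move=> wc' w' feas'; apply: le_trans (opt _ _ feas') _.
  by apply: U_mono => k; rewrite gamma_rsma_common0; exact: sinr_le_sdma.
- exact: gamma_rsma_common0.
- move=> wc w feas; exists w; split; first exact: feasible_common0 feas.
  by apply: U_mono => k; exact: sinr_le_sdma.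
Qed.
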